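(* Let $A$ satisfy the spectral assumption, with $R_1,R_2,N_1,N_2$ as below, and let $\gamma>0$, $\varepsilon_2,\varepsilon_3>0$. If $x\in\mathbb{R}^n$ satisfies $\|R_1x\|/\|R_2x\|>\gamma$, then for every $\omega\in\mathbb{N}$ $$\frac{\|R_1A^\omega x\|}{\|R_2A^\omega x\|}>\gamma_\omega:=C_\gamma\left(\frac{|\lambda_k|}{(1+\varepsilon_3|\lambda_k|)(|\lambda_{k+1}|+\varepsilon_2)}\right)^{\omega},\qquad C_\gamma:=\frac{1}{(1+\frac1\gamma)\,\zeta_{\varepsilon_3}(N_1^{-1})\,\zeta_{\varepsilon_2}(N_2)\,\|R_2\|}.$$ Consequently, if $\varepsilon_2,\varepsilon_3$ are such that the base of the power exceeds $1$, then for every $\gamma_+>0$ there is $\omega_0=O(\log(\gamma_+/\gamma))$ such that the ratio exceeds $\gamma_+$ for all $\omega>\omega_0$.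
   Context: Spectral assumption: $A\in\mathbb{R}^{n\times n}$ diagonalizable with eigenvalues $|\lambda_1|>\cdots\ge|\lambda_k|>1>|\lambda_{k+1}|\ge\cdots\ge|\lambda_n|$. $Q_1,Q_2$ have orthonormal columns spanning the unstable subspace $E_{\mathrm u}$ (eigenvectors of $\lambda_1..\lambda_k$) and stable subspace $E_{\mathrm s}$ (eigenvectors of $\lambda_{k+1}..\lambda_n$), $Q=[Q_1\ Q_2]$, $Q^{-1}=\begin{bmatrix}R_1\\R_2\end{bmatrix}$, and $Q^{-1}AQ=\mathrm{diag}(N_1,N_2)$ ($N_1$ invertible, $\rho(N_1^{-1})=1/|\lambda_k|$, $\rho(N_2)=|\lambda_{k+1}|$). For square $X$ and $\varepsilon>0$, $\zeta_\varepsilon(X):=\sup_{t\ge0}\|X^t\|/(\rho(X)+\varepsilon)^t$. Norms are spectral/Euclidean. *)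

From HB Require Import structures.
From mathcomp Require Import all_boot all_order all_algebra.
From mathcomp Require Import all_classical all_reals all_analysis.
From mathcomp Require Export complex.
Set Implicit Arguments. Unset Strict Implicit. Unset Printing Implicit Defensive.
Import Order.TTheory GRing.Theory Num.Theory.
Local Open Scope ring_scope.
Local Open Scope classical_set_scope.

Definition cmod (R : rcfType) (z : R[i]) : R :=
  Num.sqrt (complex.Re z ^+ 2 + complex.Im z ^+ 2).

Definition vnorm (R : realType) (p : nat) (v : 'cV[R]_p) : R :=
  Num.sqrt (\sum_(i < p) v i 0 ^+ 2).

Definition opnorm (R : realType) (p q : nat) (M : 'M[R]_(p, q)) : R :=
  sup [set vnorm (M *m v) | v in [set v : 'cV[R]_q | vnorm v <= 1]].

Definition specrad (R : realType) (p : nat) (X : 'M[R]_p) : R :=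
  sup [set cmod mu | mu in [set mu : R[i] | eigenvalue (map_mx (real_complex R) X) mu]].

Definition zeta (R : realType) (p : nat) (eps : R) (X : 'M[R]_p) : R :=
  sup [set opnorm (X ^+ t) / (specrad X + eps) ^+ t | t in [set: nat]].

(* Writing y = R1 x and z = R2 x, the two blocks decouple: R1 A^w x = N1^w y and
   R2 A^w x = N2^w z.  By definition of zeta,
     ||y|| <= zeta(N1^-1) (rho(N1^-1) + eps3)^w ||N1^w y||  and
     ||N2^w z|| <= zeta(N2) (rho(N2) + eps2)^w ||z||,
   which together with gamma ||z|| < ||y|| give the lower bound, because
   rho(N1^-1) + eps3 = (1 + eps3 |lam_k|) / |lam_k|; the factor 1 + 1/gamma and ||R2|| >= 1
   (R2 is a left inverse of the isometry Q2) only weaken it.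
   Both zetas are finite, indeed >= 1: in the eigenbasis P, the coordinates of a vector of E_u
   (resp. E_s) only meet eigenvalues of modulus >= |lam_k| (resp. <= |lam_(k+1)|), whence
   ||N1^w y|| >= c |lam_k|^w ||y|| and ||N2^w z|| <= C |lam_(k+1)|^w ||z||.  So C_gamma > 0, and
   the second claim follows by solving C_gamma base^w >= gamma_+ for w with logarithms. *)

From HB Require Import structures.
From mathcomp Require Import all_boot all_order all_algebra.
From mathcomp Require Import all_classical all_reals all_analysis.
From mathcomp Require Import complex.
From mathcomp Require Import ring lra.
Import Order.TTheory GRing.Theory Num.Theory.
Local Open Scope ring_scope.
Local Open Scope classical_set_scope.
Local Open Scope complex_scope.
Set Implicit Arguments. Unset Strict Implicit.

Local Notation phi := (map_mx (real_complex _)).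

Section EuclideanNorm.
Variable R : realType.

Lemma vnorm_ge0 p (v : 'cV[R]_p) : 0 <= vnorm v.
Proof. exact: sqrtr_ge0. Qed.

Lemma vnormZ p (c : R) (v : 'cV[R]_p) : vnorm (c *: v) = `|c| * vnorm v.
Proof.
rewrite /vnorm -sqrtr_sqr -sqrtrM ?sqr_ge0 // mulr_sumr.
by congr Num.sqrt; apply: eq_bigr => i _; rewrite mxE exprMn.
Qed.

Lemma vnorm0 p : vnorm (0 : 'cV[R]_p) = 0.
Proof. by rewrite -(scale0r 0) vnormZ normr0 mul0r. Qed.

Lemma vnorm_eq0 p (v : 'cV[R]_p) : (vnorm v == 0) = (v == 0).
Proof.
apply/idP/eqP => [|->]; last by rewrite vnorm0.
rewrite sqrtr_eq0 => sum_le0; apply/matrixP => i j; rewrite ord1 mxE.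
have sum0 : \sum_(i < p) v i 0 ^+ 2 = 0.
  by apply/le_anti; rewrite sum_le0 sumr_ge0 // => l _; rewrite sqr_ge0.
by apply/eqP; rewrite -sqrf_eq0; apply/eqP/(psumr_eq0P _ sum0) => // l _; rewrite sqr_ge0.
Qed.

Lemma vnorm_gt0 p (v : 'cV[R]_p) : (0 < vnorm v) = (v != 0).
Proof. by rewrite lt0r vnorm_ge0 andbT vnorm_eq0. Qed.

Lemma vnorm_entry p (v : 'cV[R]_p) i : `|v i 0| <= vnorm v.
Proof.
rewrite /vnorm -sqrtr_sqr ler_wsqrtr // (bigD1 i) //= lerDl.
by apply: sumr_ge0 => j _; rewrite sqr_ge0.
Qed.

Lemma vnorm_le_norm1 p (v : 'cV[R]_p) : vnorm v <= \sum_(i < p) `|v i 0|.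
Proof.
have sum_ge0 : 0 <= \sum_(i < p) `|v i 0| by apply: sumr_ge0.
rewrite /vnorm -[leRHS]ger0_norm // -sqrtr_sqr ler_wsqrtr // expr2 mulr_suml.
apply: ler_sum => i _; rewrite -[v i 0 ^+ 2]ger0_norm ?sqr_ge0 // normrX expr2.
by rewrite ler_wpM2l // (bigD1 i) //= lerDl; apply: sumr_ge0.
Qed.

Lemma norm1_le_vnorm p (v : 'cV[R]_p) : \sum_(i < p) `|v i 0| <= p%:R * vnorm v.
Proof.
have -> : p%:R * vnorm v = \sum_(i < p) vnorm v by rewrite sumr_const card_ord mulr_natl.
by apply: ler_sum => i _; apply: vnorm_entry.
Qed.

Lemma vnorm_orthonormal p q (Q : 'M[R]_(p, q)) (v : 'cV[R]_q) :
  Q^T *m Q = 1%:M -> vnorm (Q *m v) = vnorm v.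
Proof.
have vnormE u : vnorm u = Num.sqrt ((u^T *m u) 0 0 : R).
  by rewrite mxE; congr Num.sqrt; apply: eq_bigr => i _; rewrite mxE expr2.
by move=> QQ; rewrite !vnormE trmx_mul mulmxA -(mulmxA _ _ Q) QQ mulmx1.
Qed.

Lemma opnorm_has_sup p q (M : 'M[R]_(p, q)) :
  has_sup [set vnorm (M *m v) | v in [set v : 'cV[R]_q | vnorm v <= 1]].
Proof.
split; first by exists (vnorm (M *m 0)), 0; rewrite //= vnorm0.
exists (\sum_(i < p) \sum_(j < q) `|M i j|) => _ [v /= v_le1 <-].
apply: le_trans (vnorm_le_norm1 _) _; apply: ler_sum => i _; rewrite mxE.
apply: le_trans (ler_norm_sum _ _ _) _; apply: ler_sum => j _.
rewrite normrM -[leRHS]mulr1 ler_wpM2l //.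
exact: le_trans (vnorm_entry v j) v_le1.
Qed.

Lemma vnorm_mulmx_le p q (M : 'M[R]_(p, q)) v : vnorm (M *m v) <= opnorm M * vnorm v.
Proof.
have [->|v_neq0] := eqVneq v 0; first by rewrite mulmx0 !vnorm0 mulr0.
have v_gt0 : 0 < vnorm v by rewrite vnorm_gt0.
have unit_v : vnorm ((vnorm v)^-1 *: v) <= 1.
  by rewrite vnormZ ger0_norm ?invr_ge0 ?vnorm_ge0 // mulVf ?gt_eqF.
have := sup_upper_bound (opnorm_has_sup M) (ex_intro2 _ _ ((vnorm v)^-1 *: v) unit_v erefl).
rewrite -scalemxAr vnormZ ger0_norm ?invr_ge0 ?vnorm_ge0 //.
by rewrite mulrC ler_pdivrMr.
Qed.

Lemma opnorm_le p q (M : 'M[R]_(p, q)) c :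
  0 <= c -> (forall v, vnorm (M *m v) <= c * vnorm v) -> opnorm M <= c.
Proof.
move=> c_ge0 Mc; apply: ge_sup => [|_ [v /= v_le1 <-]].
  by exists (vnorm (M *m 0)), 0; rewrite //= vnorm0.
by apply: le_trans (Mc v) _; rewrite -[leRHS]mulr1 ler_wpM2l.
Qed.

Lemma opnorm_ge1 p q (B : 'M[R]_(p, q)) (Q : 'M[R]_(q, p)) :
  (0 < p)%N -> B *m Q = 1%:M -> Q^T *m Q = 1%:M -> 1 <= opnorm B.
Proof.
move=> p_gt0 BQ QQ; set e := const_mx 1 : 'cV[R]_p.
have e_gt0 : 0 < vnorm e.
  rewrite vnorm_gt0; apply/negP => /eqP/matrixP/(_ (Ordinal p_gt0) 0).
  by rewrite !mxE => /eqP; rewrite oner_eq0.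
have := vnorm_mulmx_le B (Q *m e).
by rewrite mulmxA BQ mul1mx vnorm_orthonormal // -{1}[vnorm e]mul1r ler_pM2r.
Qed.

(* [zeta] is a [sup], so it is [0] when the set is unbounded; [0 < zeta eps X] excludes that. *)
Lemma opnorm_exp_le_zeta p eps (X : 'M[R]_p) t :
  0 < specrad X + eps -> 0 < zeta eps X ->
  opnorm (X ^+ t) <= zeta eps X * (specrad X + eps) ^+ t.
Proof.
move=> rho_gt0 zeta_gt0.
set E := [set opnorm (X ^+ t) / (specrad X + eps) ^+ t | t in [set: nat]].
have [has_sup_zeta|no_sup] := pselect (has_sup E); last first.
  by move: zeta_gt0; rewrite /zeta -/E sup_out // ltxx.
have := sup_upper_bound has_sup_zeta (ex_intro2 _ _ t I erefl).
by rewrite -/(zeta eps X) ler_pdivrMr // exprn_gt0.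
Qed.

Lemma zeta_ge1 p eps (X : 'M[R]_p) K : (0 < p)%N -> 0 < specrad X + eps -> 0 <= K ->
  (forall t v, vnorm (X ^+ t *m v) <= K * (specrad X + eps) ^+ t * vnorm v) ->
  1 <= zeta eps X.
Proof.
move=> p_gt0 rho_gt0 K_ge0 XK.
have opnorm_bounded t : opnorm (X ^+ t) / (specrad X + eps) ^+ t <= K.
  rewrite ler_pdivrMr ?exprn_gt0 //.
  by apply: opnorm_le => //; rewrite mulr_ge0 // exprn_ge0 // ltW.
have zeta_sup : has_sup [set opnorm (X ^+ t) / (specrad X + eps) ^+ t | t in [set: nat]].
  by split; [exists (opnorm (X ^+ 0) / (specrad X + eps) ^+ 0), 0 | exists K => _ [t _ <-]].
apply: le_trans (sup_upper_bound zeta_sup (ex_intro2 _ _ 0%N I erefl)).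
rewrite expr0 divr1; apply: (opnorm_ge1 p_gt0 (Q := 1%:M)); first by rewrite mulmx1.
by rewrite trmx1 mulmx1.
Qed.

End EuclideanNorm.

Section ComplexNorm1.
Variable R : realType.

Lemma normc_cmod (z : R[i]) : `|z| = (cmod z)%:C.
Proof. by rewrite normc_def. Qed.

Definition norm1 p (v : 'cV[R[i]]_p) : R[i] := \sum_(i < p) `|v i 0|.

Definition entry_norm1 p q (X : 'M[R[i]]_(p, q)) : R :=
  \sum_(i < p) \sum_(j < q) cmod (X i j).

Lemma entry_norm1_ge0 p q (X : 'M[R[i]]_(p, q)) : 0 <= entry_norm1 X.
Proof. by do 2!apply: sumr_ge0 => ? _; apply: sqrtr_ge0. Qed.

Lemma entry_norm1E p q (X : 'M[R[i]]_(p, q)) :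
  (entry_norm1 X)%:C = \sum_(i < p) \sum_(j < q) `|X i j|.
Proof.
rewrite rmorph_sum; apply: eq_bigr => i _; rewrite rmorph_sum.
by apply: eq_bigr => j _; rewrite normc_cmod.
Qed.

Lemma norm1_mulmx p q (X : 'M[R[i]]_(p, q)) v :
  norm1 (X *m v) <= (entry_norm1 X)%:C * norm1 v.
Proof.
rewrite entry_norm1E mulr_suml; apply: ler_sum => i _; rewrite mxE.
apply: le_trans (ler_norm_sum _ _ _) _; rewrite mulr_suml.
apply: ler_sum => j _; rewrite normrM ler_wpM2l //.
by rewrite /norm1 (bigD1 j) //= lerDl; apply: sumr_ge0.
Qed.

Lemma norm1_map_real p (u : 'cV[R]_p) : norm1 (phi u) = (\sum_(i < p) `|u i 0|)%:C.
Proof.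
rewrite rmorph_sum; apply: eq_bigr => i _.
by rewrite mxE normc_def /= expr0n /= addr0 sqrtr_sqr.
Qed.

Lemma diag_mx_exp_mul p (d : 'rV[R[i]]_p) w (v : 'cV[R[i]]_p) :
  diag_mx d ^+ w *m v = \col_i (d 0 i ^+ w * v i 0).
Proof.
elim: w => [|w IHw].
  by apply/matrixP => i j; rewrite expr0 mul1mx [j]ord1 !mxE expr0 mul1r.
rewrite exprS -mulmxE -mulmxA IHw mul_diag_mx; apply/matrixP => i j.
by rewrite [j]ord1 !mxE exprS mulrA.
Qed.

Lemma norm1_diag_exp_le p (d : 'rV[R[i]]_p) w (v : 'cV[R[i]]_p) c : 0 <= c ->
  (forall i, v i 0 != 0 -> `|d 0 i| <= c) -> norm1 (diag_mx d ^+ w *m v) <= c ^+ w * norm1 v.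
Proof.
move=> c_ge0 dc; rewrite diag_mx_exp_mul /norm1 mulr_sumr; apply: ler_sum => i _.
rewrite mxE normrM normrX.
have [->|v_neq0] := eqVneq (v i 0) 0; first by rewrite normr0 !mulr0.
by rewrite ler_wpM2r // lerXn2r ?nnegrE ?dc.
Qed.

Lemma norm1_diag_exp_ge p (d : 'rV[R[i]]_p) w (v : 'cV[R[i]]_p) c : 0 <= c ->
  (forall i, v i 0 != 0 -> c <= `|d 0 i|) -> c ^+ w * norm1 v <= norm1 (diag_mx d ^+ w *m v).
Proof.
move=> c_ge0 dc; rewrite diag_mx_exp_mul /norm1 mulr_sumr; apply: ler_sum => i _.
rewrite mxE normrM normrX.
have [->|v_neq0] := eqVneq (v i 0) 0; first by rewrite normr0 !mulr0.
by rewrite ler_wpM2r // lerXn2r ?nnegrE ?dc.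
Qed.

End ComplexNorm1.

Section MatrixPowers.
Variable T : comUnitRingType.

Lemma mulmx_exp_comm p q (B : 'M[T]_(p, q)) (X : 'M[T]_q) (Y : 'M[T]_p) w :
  B *m X = Y *m B -> B *m X ^+ w = Y ^+ w *m B.
Proof.
move=> BXY; elim: w => [|w IHw]; first by rewrite !expr0 mulmx1 mul1mx.
by rewrite !exprSr -!mulmxE mulmxA IHw -mulmxA BXY mulmxA.
Qed.

Lemma mulmx_exp_inv p (X Y : 'M[T]_p) w : X *m Y = 1%:M -> X ^+ w *m Y ^+ w = 1%:M.
Proof.
move=> XY; elim: w => [|w IHw]; first by rewrite !expr0 mulmx1.
by rewrite exprSr exprS -!mulmxE -mulmxA (mulmxA X) XY mul1mx IHw.
Qed.

End MatrixPowers.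

Lemma map_mx_exp (aR rR : nzRingType) (f : {rmorphism aR -> rR}) p (X : 'M[aR]_p) w :
  map_mx f (X ^+ w) = map_mx f X ^+ w.
Proof.
elim: w => [|w IHw]; first by rewrite !expr0 map_mx1.
by rewrite !exprS -!mulmxE map_mxM IHw.
Qed.

Section EigenCoordinates.
Variables (R : realType) (n p : nat) (A : 'M[R]_n) (P : 'M[R[i]]_n) (d : 'rV[R[i]]_n).
Variables (Q : 'M[R]_(n, p)) (B : 'M[R]_(p, n)) (N : 'M[R]_p).
Hypotheses (P_unit : P \in unitmx) (A_diag : phi A = P *m diag_mx d *m invmx P).
Hypotheses (BQ : B *m Q = 1%:M) (AQ : A *m Q = Q *m N).

Definition eigen_coord (y : 'cV[R]_p) := invmx P *m phi (Q *m y).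

Lemma diag_exp_eigen_coord y w :
  diag_mx d ^+ w *m eigen_coord y = (invmx P *m phi Q) *m phi (N ^+ w *m y).
Proof.
have PA : invmx P *m phi A = diag_mx d *m invmx P.
  by rewrite A_diag !mulmxA mulVmx // mul1mx.
have QN : Q *m N ^+ w = A ^+ w *m Q by apply: mulmx_exp_comm; rewrite AQ.
have PAw : diag_mx d ^+ w *m invmx P = invmx P *m phi (A ^+ w).
  by rewrite map_mx_exp (mulmx_exp_comm w PA).
rewrite /eigen_coord mulmxA PAw -(mulmxA _ (phi (A ^+ w))) -map_mxM (mulmxA (A ^+ w)).
by rewrite -QN -mulmxA map_mxM mulmxA.
Qed.

Lemma map_exp_eigen_coord y w :
  phi (N ^+ w *m y) = (phi B *m P) *m (diag_mx d ^+ w *m eigen_coord y).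
Proof.
by rewrite diag_exp_eigen_coord -!mulmxA mulKVmx // mulmxA -map_mxM BQ map_mx1 mul1mx.
Qed.

Lemma norm1_eigen_coord y :
  norm1 (eigen_coord y) <= (entry_norm1 (invmx P *m phi Q))%:C * norm1 (phi y).
Proof. by have := diag_exp_eigen_coord y 0; rewrite !expr0 !mul1mx => ->; apply: norm1_mulmx. Qed.

Lemma exp_growth_le (l : R) : 0 <= l ->
  (forall y i, eigen_coord y i 0 != 0 -> `|d 0 i| <= l%:C) ->
  exists2 K, 0 <= K & forall y w, vnorm (N ^+ w *m y) <= K * l ^+ w * vnorm y.
Proof.
move=> l_ge0 d_le.
set KB := entry_norm1 (phi B *m P); set KP := entry_norm1 (invmx P *m phi Q).
exists (KB * KP * p%:R); first by rewrite !mulr_ge0 ?entry_norm1_ge0.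
move=> y w.
have lC_ge0 : 0 <= l%:C by rewrite ler0c.
have : norm1 (phi (N ^+ w *m y)) <= (KB * KP * l ^+ w)%:C * norm1 (phi y).
  rewrite map_exp_eigen_coord; apply: le_trans (norm1_mulmx _ _) _.
  apply: le_trans (ler_wpM2l _ (norm1_diag_exp_le w lC_ge0 (d_le y))) _.
    by rewrite ler0c entry_norm1_ge0.
  apply: le_trans (ler_wpM2l _ (ler_wpM2l _ (norm1_eigen_coord y))) _.
  - by rewrite ler0c entry_norm1_ge0.
  - exact: exprn_ge0.
  by rewrite !rmorphM rmorphXn -!mulrA [X in _ <= _ * X]mulrCA.
rewrite !norm1_map_real -rmorphM lecR => norm1_le.
apply: le_trans (vnorm_le_norm1 _) _; apply: le_trans norm1_le _.
have -> : KB * KP * p%:R * l ^+ w * vnorm y = KB * KP * l ^+ w * (p%:R * vnorm y) by ring.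
by rewrite ler_wpM2l ?norm1_le_vnorm // !mulr_ge0 ?entry_norm1_ge0 ?exprn_ge0.
Qed.

Lemma exp_growth_ge (L : R) : 0 <= L ->
  (forall y i, eigen_coord y i 0 != 0 -> L%:C <= `|d 0 i|) ->
  exists2 K, 0 <= K & forall y w, L ^+ w * vnorm y <= K * vnorm (N ^+ w *m y).
Proof.
move=> L_ge0 d_ge.
set KB := entry_norm1 (phi B *m P); set KP := entry_norm1 (invmx P *m phi Q).
exists (KB * KP * p%:R); first by rewrite !mulr_ge0 ?entry_norm1_ge0.
move=> y w.
have LC_ge0 : 0 <= L%:C by rewrite ler0c.
have : (L ^+ w)%:C * norm1 (phi y) <= (KB * KP)%:C * norm1 (phi (N ^+ w *m y)).
  have := map_exp_eigen_coord y 0; rewrite !expr0 !mul1mx => ->.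
  apply: le_trans (ler_wpM2l _ (norm1_mulmx _ _)) _; first by rewrite ler0c exprn_ge0.
  rewrite rmorphXn mulrCA rmorphM -mulrA ler_wpM2l ?ler0c ?entry_norm1_ge0 //.
  apply: le_trans (norm1_diag_exp_ge w LC_ge0 (d_ge y)) _.
  by rewrite diag_exp_eigen_coord; apply: norm1_mulmx.
rewrite !norm1_map_real -!rmorphM lecR => norm1_le.
apply: le_trans (ler_wpM2l (exprn_ge0 _ L_ge0) (vnorm_le_norm1 y)) _.
apply: le_trans norm1_le _; rewrite -[leRHS]mulrA ler_wpM2l ?mulr_ge0 ?entry_norm1_ge0 //.
exact: norm1_le_vnorm.
Qed.

End EigenCoordinates.

Section BlockDiagonalization.
Variables (T : comUnitRingType) (k m : nat).

Lemma invmx_lsubmx_mul (P : 'M[T]_(k + m)) (z : 'cV[T]_k) :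
  P \in unitmx -> invmx P *m (lsubmx P *m z) = col_mx z 0.
Proof.
have -> : lsubmx P *m z = P *m col_mx z 0.
  by rewrite -[P in P *m col_mx _ _]hsubmxK mul_row_col mulmx0 addr0.
by move=> P_unit; rewrite mulKmx.
Qed.

Lemma invmx_rsubmx_mul (P : 'M[T]_(k + m)) (z : 'cV[T]_m) :
  P \in unitmx -> invmx P *m (rsubmx P *m z) = col_mx 0 z.
Proof.
have -> : rsubmx P *m z = P *m col_mx 0 z.
  by rewrite -[P in P *m col_mx _ _]hsubmxK mul_row_col mulmx0 add0r.
by move=> P_unit; rewrite mulKmx.
Qed.

Lemma col_mx0_support (z : 'cV[T]_k) (i : 'I_(k + m)) : col_mx z 0 i 0 != 0 -> (i < k)%N.
Proof. by rewrite mxE; case: splitP => j _ //; rewrite mxE eqxx. Qed.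

Lemma col_0mx_support (z : 'cV[T]_m) (i : 'I_(k + m)) : col_mx 0 z i 0 != 0 -> (k <= i)%N.
Proof. by rewrite mxE; case: splitP => j ->; rewrite ?mxE ?eqxx // leq_addr. Qed.

Variables (A : 'M[T]_(k + m)) (Q1 : 'M[T]_(k + m, k)) (Q2 : 'M[T]_(k + m, m)).
Variables (R1 : 'M[T]_(k, k + m)) (R2 : 'M[T]_(m, k + m)) (N1 : 'M[T]_k) (N2 : 'M[T]_m).
Hypotheses (Q_unit : row_mx Q1 Q2 \in unitmx) (Q_inv : invmx (row_mx Q1 Q2) = col_mx R1 R2).

Let QR : row_mx Q1 Q2 *m col_mx R1 R2 = 1%:M.
Proof. by rewrite -Q_inv mulmxV. Qed.

Lemma block_left_inverse : R1 *m Q1 = 1%:M /\ R2 *m Q2 = 1%:M.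
Proof.
have : col_mx R1 R2 *m row_mx Q1 Q2 = 1%:M by rewrite -Q_inv mulVmx.
by rewrite mul_col_row (scalar_mx_block k m) => /eq_block_mx[R1Q1 _ _ R2Q2].
Qed.

Lemma block_diag_intertwine :
  invmx (row_mx Q1 Q2) *m A *m row_mx Q1 Q2 = block_mx N1 0 0 N2 ->
  [/\ R1 *m A = N1 *m R1, R2 *m A = N2 *m R2, A *m Q1 = Q1 *m N1 & A *m Q2 = Q2 *m N2].
Proof.
move=> Q_conj.
have : col_mx R1 R2 *m A = block_mx N1 0 0 N2 *m col_mx R1 R2.
  by rewrite -Q_conj -!mulmxA QR mulmx1 Q_inv.
rewrite mul_col_mx mul_block_col !mul0mx addr0 add0r => /eq_col_mx[R1A R2A].
have : A *m row_mx Q1 Q2 = row_mx Q1 Q2 *m block_mx N1 0 0 N2.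
  by rewrite -Q_conj Q_inv !mulmxA QR mul1mx.
by rewrite mul_mx_row mul_row_block !mulmx0 addr0 add0r => /eq_row_mx[AQ1 AQ2].
Qed.

End BlockDiagonalization.

Lemma geometric_growth_threshold (R : realType) (c b : R) : 0 < c -> 1 < b ->
  exists K, forall t, 0 < t -> exists w0 : nat,
    w0%:R <= K * (1 + Num.max 0 (ln t)) /\ forall w, (w0 < w)%N -> t <= c * b ^+ w.
Proof.
move=> c_gt0 b_gt1; have lnb_gt0 : 0 < ln b by rewrite ln_gt0.
exists ((1 + `|ln c|) / ln b) => t t_gt0.
set M := Num.max 0 (ln t); have M_ge0 : 0 <= M by rewrite le_max lexx.
have lnt_le : ln t <= M by rewrite le_max lexx orbT.
have lnc_ge : - ln c <= `|ln c| by rewrite -normrN ler_norm.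
set x := (M + `|ln c|) / ln b; have x_ge0 : 0 <= x by rewrite divr_ge0 ?addr_ge0 // ltW.
exists (Num.truncn x); split=> [|w].
  apply: le_trans (_ : x <= _); first by rewrite truncn_le.
  by rewrite /x mulrAC ler_pM2r ?invr_gt0 //; have := normr_ge0 (ln c); nra.
rewrite truncn_lt_nat // ltr_pdivrMr // => x_lt_w.
have b_gt0 : 0 < b := lt_trans ltr01 b_gt1.
have bw_gt0 : 0 < b ^+ w by rewrite exprn_gt0.
rewrite -ler_ln ?posrE ?mulr_gt0 // lnM ?posrE // lnXn // -mulr_natr.
lra.
Qed.

Section HyperbolicSplitting.
Variables (R : realType) (k m : nat) (A : 'M[R]_(k + m)) (lam : nat -> R[i]).
Variables (P : 'M[R[i]]_(k + m)) (Q1 : 'M[R]_(k + m, k)) (Q2 : 'M[R]_(k + m, m)).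
Variables (R1 : 'M[R]_(k, k + m)) (R2 : 'M[R]_(m, k + m)) (N1 : 'M[R]_k) (N2 : 'M[R]_m).
Hypotheses (k_gt0 : (0 < k)%N) (m_gt0 : (0 < m)%N) (P_unit : P \in unitmx).
Hypothesis A_diag : phi A = P *m diag_mx (\row_(j < k + m) lam j.+1) *m invmx P.
Hypothesis lam_sorted : forall i j : nat, (1 <= i)%N -> (i <= j)%N -> (j <= k + m)%N ->
  cmod (lam j) <= cmod (lam i).
Hypothesis lam_k_gt0 : 0 < cmod (lam k).
Hypothesis Q2_orthonormal : Q2^T *m Q2 = 1%:M.
Hypothesis Q1_unstable : forall x : 'cV[R]_(k + m),
  (exists y, x = Q1 *m y) -> exists z, phi x = lsubmx P *m z.
Hypothesis Q2_stable : forall x : 'cV[R]_(k + m),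
  (exists y, x = Q2 *m y) -> exists z, phi x = rsubmx P *m z.
Hypotheses (Q_unit : row_mx Q1 Q2 \in unitmx) (Q_inv : invmx (row_mx Q1 Q2) = col_mx R1 R2).
Hypothesis Q_conj : invmx (row_mx Q1 Q2) *m A *m row_mx Q1 Q2 = block_mx N1 0 0 N2.
Hypotheses (N1_unit : N1 \in unitmx) (specrad_invN1 : specrad (invmx N1) = 1 / cmod (lam k)).
Hypothesis specrad_N2 : specrad N2 = cmod (lam k.+1).

Let R1Q1 : R1 *m Q1 = 1%:M. Proof. by case: (block_left_inverse Q_unit Q_inv). Qed.
Let R2Q2 : R2 *m Q2 = 1%:M. Proof. by case: (block_left_inverse Q_unit Q_inv). Qed.
Let R1A : R1 *m A = N1 *m R1. Proof. by case: (block_diag_intertwine Q_unit Q_inv Q_conj). Qed.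
Let R2A : R2 *m A = N2 *m R2. Proof. by case: (block_diag_intertwine Q_unit Q_inv Q_conj). Qed.
Let AQ1 : A *m Q1 = Q1 *m N1. Proof. by case: (block_diag_intertwine Q_unit Q_inv Q_conj). Qed.
Let AQ2 : A *m Q2 = Q2 *m N2. Proof. by case: (block_diag_intertwine Q_unit Q_inv Q_conj). Qed.

Let specrad_invN1_add_gt0 eps : 0 < eps -> 0 < specrad (invmx N1) + eps.
Proof. by move=> eps_gt0; rewrite specrad_invN1 addr_gt0 ?divr_gt0. Qed.

Let specrad_N2_add_gt0 eps : 0 < eps -> 0 < specrad N2 + eps.
Proof. by move=> eps_gt0; rewrite specrad_N2 ltr_wpDl ?sqrtr_ge0. Qed.

Lemma unstable_eigen_coord y i : eigen_coord P Q1 y i 0 != 0 ->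
  (cmod (lam k))%:C <= `|(\row_(j < k + m) lam j.+1) 0 i|.
Proof.
have [z Q1y] := Q1_unstable (ex_intro _ y erefl).
rewrite /eigen_coord Q1y invmx_lsubmx_mul // => /col_mx0_support i_lt_k.
by rewrite mxE normc_cmod lecR lam_sorted ?leq_addr.
Qed.

Lemma stable_eigen_coord z i : eigen_coord P Q2 z i 0 != 0 ->
  `|(\row_(j < k + m) lam j.+1) 0 i| <= (cmod (lam k.+1))%:C.
Proof.
have [c Q2z] := Q2_stable (ex_intro _ z erefl).
rewrite /eigen_coord Q2z invmx_rsubmx_mul // => /col_0mx_support k_le_i.
by rewrite mxE normc_cmod lecR lam_sorted ?ltn_ord.
Qed.

Lemma N1_exp_growth : exists2 K, 0 <= K &
  forall y w, cmod (lam k) ^+ w * vnorm y <= K * vnorm (N1 ^+ w *m y).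
Proof.
exact: (exp_growth_ge P_unit A_diag R1Q1 AQ1 (L := cmod (lam k)))
  (sqrtr_ge0 _) unstable_eigen_coord.
Qed.

Lemma N2_exp_growth : exists2 K, 0 <= K &
  forall z w, vnorm (N2 ^+ w *m z) <= K * cmod (lam k.+1) ^+ w * vnorm z.
Proof.
exact: (exp_growth_le P_unit A_diag R2Q2 AQ2 (l := cmod (lam k.+1)))
  (sqrtr_ge0 _) stable_eigen_coord.
Qed.

Lemma invN1_exp_mul w (y : 'cV[R]_k) : invmx N1 ^+ w *m (N1 ^+ w *m y) = y.
Proof. by rewrite mulmxA mulmx_exp_inv ?mulVmx // mul1mx. Qed.

Lemma zeta_invN1_ge1 eps : 0 < eps -> 1 <= zeta eps (invmx N1).
Proof.
move=> eps_gt0; have [K K_ge0 N1K] := N1_exp_growth.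
apply: (zeta_ge1 k_gt0 (specrad_invN1_add_gt0 eps_gt0) K_ge0) => t v.
have := N1K (invmx N1 ^+ t *m v) t; rewrite mulmxA mulmx_exp_inv ?mulmxV // mul1mx.
rewrite -ler_pdivlMl ?exprn_gt0 // => /le_trans; apply.
rewrite -mulrA mulrCA ler_wpM2l // ler_wpM2r ?vnorm_ge0 // -exprVn specrad_invN1 div1r.
by rewrite lerXn2r ?nnegrE ?lerDl ?ltW ?addr_gt0 ?invr_gt0.
Qed.

Lemma zeta_N2_ge1 eps : 0 < eps -> 1 <= zeta eps N2.
Proof.
move=> eps_gt0; have [K K_ge0 N2K] := N2_exp_growth.
apply: (zeta_ge1 m_gt0 (specrad_N2_add_gt0 eps_gt0) K_ge0) => t v.
apply: le_trans (N2K v t) _; rewrite ler_wpM2r ?vnorm_ge0 // ler_wpM2l // specrad_N2.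
by rewrite lerXn2r ?nnegrE ?lerDl ?addr_ge0 ?sqrtr_ge0 // ltW.
Qed.

Lemma opnorm_R2_ge1 : 1 <= opnorm R2.
Proof. exact: opnorm_ge1 m_gt0 R2Q2 Q2_orthonormal. Qed.

Lemma vnorm_le_zeta_invN1 w (y : 'cV[R]_k) eps : 0 < eps ->
  vnorm y <= zeta eps (invmx N1) * (specrad (invmx N1) + eps) ^+ w * vnorm (N1 ^+ w *m y).
Proof.
move=> eps_gt0; rewrite -{1}(invN1_exp_mul w y); apply: le_trans (vnorm_mulmx_le _ _) _.
by rewrite ler_wpM2r ?vnorm_ge0 // opnorm_exp_le_zeta ?specrad_invN1_add_gt0
  ?(lt_le_trans ltr01 (zeta_invN1_ge1 _)).
Qed.

Lemma vnorm_N2_exp_le_zeta w (z : 'cV[R]_m) eps : 0 < eps ->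
  vnorm (N2 ^+ w *m z) <= zeta eps N2 * (specrad N2 + eps) ^+ w * vnorm z.
Proof.
move=> eps_gt0; apply: le_trans (vnorm_mulmx_le _ _) _.
by rewrite ler_wpM2r ?vnorm_ge0 // opnorm_exp_le_zeta ?specrad_N2_add_gt0
  ?(lt_le_trans ltr01 (zeta_N2_ge1 _)).
Qed.

Local Notation C_ gamma eps2 eps3 :=
  (1 / ((1 + 1 / gamma) * zeta eps3 (invmx N1) * zeta eps2 N2 * opnorm R2)).
Local Notation base eps2 eps3 :=
  (cmod (lam k) / ((1 + eps3 * cmod (lam k)) * (cmod (lam k.+1) + eps2))).

Lemma ratio_lower_bound gamma eps2 eps3 : 0 < gamma -> 0 < eps2 -> 0 < eps3 ->
  forall x : 'cV[R]_(k + m), gamma * vnorm (R2 *m x) < vnorm (R1 *m x) -> forall w,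
  C_ gamma eps2 eps3 * base eps2 eps3 ^+ w * vnorm (R2 *m (A ^+ w *m x)) <
  vnorm (R1 *m (A ^+ w *m x)).
Proof.
move=> gamma_gt0 eps2_gt0 eps3_gt0 x ratio_x w.
rewrite !mulmxA (mulmx_exp_comm w R1A) (mulmx_exp_comm w R2A) -!mulmxA.
move: ratio_x; set y := R1 *m x; set z := R2 *m x => ratio_x.
have y_le := vnorm_le_zeta_invN1 w y eps3_gt0.
have N2z_le := vnorm_N2_exp_le_zeta w z eps2_gt0.
have Z3_ge1 := zeta_invN1_ge1 eps3_gt0; have Z2_ge1 := zeta_N2_ge1 eps2_gt0.
have O_ge1 := opnorm_R2_ge1.
have a_gt0 := specrad_invN1_add_gt0 eps3_gt0; have s_gt0 := specrad_N2_add_gt0 eps2_gt0.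
have -> : base eps2 eps3 = ((specrad (invmx N1) + eps3) * (specrad N2 + eps2))^-1.
  have l_eps2_gt0 : 0 < cmod (lam k.+1) + eps2 by rewrite -specrad_N2.
  by rewrite specrad_invN1 specrad_N2; field; rewrite !gt_eqF // addr_gt0 ?mulr_gt0.
move: y_le N2z_le; set Z3 := zeta eps3 (invmx N1); set Z2 := zeta eps2 N2.
set Y := vnorm (N1 ^+ w *m y); set W := vnorm (N2 ^+ w *m z).
set u := (specrad (invmx N1) + eps3) ^+ w; set v := (specrad N2 + eps2) ^+ w.
set ig := 1 / gamma => y_le N2z_le.
have [u_gt0 v_gt0] : 0 < u /\ 0 < v by rewrite !exprn_gt0.
have ig_gt0 : 0 < ig by rewrite divr_gt0.
have -> : 1 / ((1 + ig) * Z3 * Z2 * opnorm R2) *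
    ((specrad (invmx N1) + eps3) * (specrad N2 + eps2))^-1 ^+ w * W =
    W / ((1 + ig) * Z3 * Z2 * opnorm R2 * (u * v)).
  rewrite exprVn exprMn -/u -/v; field.
  by rewrite !gt_eqF ?addr_gt0 // (lt_le_trans ltr01).
rewrite ltr_pdivrMr; last by rewrite !mulr_gt0 ?addr_gt0 // (lt_le_trans ltr01).
have z_lt : vnorm z < vnorm y * ig by rewrite /ig mul1r ltr_pdivlMr // mulrC.
have Z2v_gt0 : 0 < Z2 * v by rewrite mulr_gt0 // (lt_le_trans ltr01).
apply: le_lt_trans N2z_le _.
apply: (@lt_le_trans _ _ (Z2 * v * (Z3 * u * Y * ig))).
  by rewrite ltr_pM2l //; apply: lt_le_trans z_lt _; rewrite ler_wpM2r // ltW.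
have -> : Y * ((1 + ig) * Z3 * Z2 * opnorm R2 * (u * v)) =
    Z2 * v * (Z3 * u * Y * ((1 + ig) * opnorm R2)) by ring.
have Z3uY_ge0 : 0 <= Z3 * u * Y by rewrite !mulr_ge0 ?vnorm_ge0 ?ltW // (lt_le_trans ltr01).
by rewrite ler_pM2l //; apply: ler_wpM2l => //; nra.
Qed.

Lemma ratio_eventually_gt gamma eps2 eps3 : 0 < gamma -> 0 < eps2 -> 0 < eps3 ->
  1 < base eps2 eps3 -> exists K, forall gp, 0 < gp -> exists w0 : nat,
    w0%:R <= K * (1 + Num.max 0 (ln (gp / gamma))) /\
    forall x : 'cV[R]_(k + m), gamma * vnorm (R2 *m x) < vnorm (R1 *m x) ->
    forall w, (w0 < w)%N -> gp * vnorm (R2 *m (A ^+ w *m x)) < vnorm (R1 *m (A ^+ w *m x)).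
Proof.
move=> gamma_gt0 eps2_gt0 eps3_gt0 base_gt1.
have C_gt0 : 0 < C_ gamma eps2 eps3.
  have [Z3_ge1 Z2_ge1] := (zeta_invN1_ge1 eps3_gt0, zeta_N2_ge1 eps2_gt0).
  by rewrite divr_gt0 // !mulr_gt0 ?addr_gt0 ?divr_gt0 // (lt_le_trans ltr01) ?opnorm_R2_ge1.
have [K threshold] := geometric_growth_threshold (divr_gt0 C_gt0 gamma_gt0) base_gt1.
exists K => gp gp_gt0; have [w0 [w0_le w0_large]] := threshold _ (divr_gt0 gp_gt0 gamma_gt0).
exists w0; split=> // x ratio_x w w0_lt_w.
apply: le_lt_trans (ratio_lower_bound gamma_gt0 eps2_gt0 eps3_gt0 ratio_x w).
rewrite ler_wpM2r ?vnorm_ge0 //.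
by move: (w0_large w w0_lt_w); rewrite mulrAC ler_pM2r ?invr_gt0.
Qed.

End HyperbolicSplitting.

Unset Implicit Arguments.

Theorem mainTheorem10 (R : realType) (k m : nat) (A : 'M[R]_(k + m))
  (lam : nat -> R[i]) (P : 'M[R[i]]_(k + m))
  (Q1 : 'M[R]_(k + m, k)) (Q2 : 'M[R]_(k + m, m))
  (R1 : 'M[R]_(k, k + m)) (R2 : 'M[R]_(m, k + m))
  (N1 : 'M[R]_k) (N2 : 'M[R]_m) :
  (0 < k)%N -> (0 < m)%N ->
  P \in unitmx ->
  map_mx (real_complex R) A = P *m diag_mx (\row_(j < k + m) lam j.+1) *m invmx P ->
  (forall i j : nat, (1 <= i)%N -> (i <= j)%N -> (j <= k + m)%N ->
     cmod (lam j) <= cmod (lam i)) ->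
  1 < cmod (lam k) -> cmod (lam k.+1) < 1 ->
  Q1^T *m Q1 = 1%:M -> Q2^T *m Q2 = 1%:M ->
  (forall x : 'cV[R]_(k + m),
     (exists y : 'cV[R]_k, x = Q1 *m y) <->
     (exists z : 'cV[R[i]]_k, map_mx (real_complex R) x = lsubmx P *m z)) ->
  (forall x : 'cV[R]_(k + m),
     (exists y : 'cV[R]_m, x = Q2 *m y) <->
     (exists z : 'cV[R[i]]_m, map_mx (real_complex R) x = rsubmx P *m z)) ->
  row_mx Q1 Q2 \in unitmx ->
  invmx (row_mx Q1 Q2) = col_mx R1 R2 ->
  invmx (row_mx Q1 Q2) *m A *m row_mx Q1 Q2 = block_mx N1 0 0 N2 ->
  N1 \in unitmx ->
  specrad (invmx N1) = 1 / cmod (lam k) ->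
  specrad N2 = cmod (lam k.+1) ->
  forall gamma eps2 eps3 : R, 0 < gamma -> 0 < eps2 -> 0 < eps3 ->
  let Cg := 1 / ((1 + 1 / gamma) * zeta eps3 (invmx N1) * zeta eps2 N2 * opnorm R2) in
  let base := cmod (lam k) / ((1 + eps3 * cmod (lam k)) * (cmod (lam k.+1) + eps2)) in
  (forall x : 'cV[R]_(k + m), gamma * vnorm (R2 *m x) < vnorm (R1 *m x) ->
     forall w : nat,
       Cg * base ^+ w * vnorm (R2 *m (A ^+ w *m x)) < vnorm (R1 *m (A ^+ w *m x)))
  /\
  (1 < base ->
   exists K : R, forall gp : R, 0 < gp ->
     exists w0 : nat,
       w0%:R <= K * (1 + Num.max 0 (ln (gp / gamma))) /\
       forall x : 'cV[R]_(k + m), gamma * vnorm (R2 *m x) < vnorm (R1 *m x) ->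
         forall w : nat, (w0 < w)%N ->
           gp * vnorm (R2 *m (A ^+ w *m x)) < vnorm (R1 *m (A ^+ w *m x))).
Proof.
move=> k_gt0 m_gt0 P_unit A_diag lam_sorted lam_k_gt1 _ _ Q2_orthonormal Q1_span Q2_span
  Q_unit Q_inv Q_conj N1_unit specrad_invN1 specrad_N2 gamma eps2 eps3
  gamma_gt0 eps2_gt0 eps3_gt0 Cg base.
have lam_k_gt0 : 0 < cmod (lam k) := lt_trans ltr01 lam_k_gt1.
have Q1_unstable x := (Q1_span x).1.
have Q2_stable x := (Q2_span x).1.
split.
  exact: (ratio_lower_bound k_gt0 m_gt0 P_unit A_diag lam_sorted lam_k_gt0 Q2_orthonormal
    Q1_unstable Q2_stable Q_unit Q_inv Q_conj N1_unit specrad_invN1 specrad_N2).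
exact: (ratio_eventually_gt k_gt0 m_gt0 P_unit A_diag lam_sorted lam_k_gt0 Q2_orthonormal
  Q1_unstable Q2_stable Q_unit Q_inv Q_conj N1_unit specrad_invN1 specrad_N2).
Qed.
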